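(* Let $(k,|\cdot|)$ be a complete non-Archimedean field of characteristic $p>0$ with nontrivial value group. Then for every $n>0$ the Tate algebra $T_n(k)$ is Frobenius split in each of the following cases: (i) $(k,|\cdot|)$ is spherically complete; (ii) $k^{1/p}$ has a dense $k$-subspace $V$ having a countable $k$-basis (in particular if $[k^{1/p}:k]<\infty$); (iii) $|k^\times|$ is not discrete and the norm on $k^{1/p}$ is polar.
   Context: A non-Archimedean field is a field with a multiplicative absolute value satisfying the ultrametric inequality, assumed complete with nontrivial value group $|k^\times|$. $T_n(k)$ is the subring of $k[[X_1,\dots,X_n]]$ of series $\sum_\nu a_\nu X^\nu$ with $|a_\nu|\to0$ as $|\nu|\to\infty$. A ring $R$ of characteristic $p$ is Frobenius split if there is an $R$-linear map $\phi\colon F_{R*}R\to R$ with $\phi(1)=1$, where $F_{R*}R$ is $R$ with module structure $r\cdot x=r^px$. $k$ is spherically complete if every decreasing sequence of closed disks $D_1\supseteq D_2\supseteq\cdots$ in $k$ has nonempty intersection. $k^{1/p}$ carries the unique absolute value extending that of $k$ and is a normed $k$-vector space. A norm $\|\cdot\|$ on a normed $k$-space $E$ is polar if for every $x\in E$ with $\|x\|>1$ there is a $k$-linear functional $f\colon E\to k$ with $|f(y)|\le1$ for all $y$ with $\|y\|\le1$ and $|f(x)|>1$. *)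

From Stdlib Require Import Reals.
From HB Require Import structures.
From mathcomp Require Import all_boot all_order all_algebra.
Set Implicit Arguments. Unset Strict Implicit. Unset Printing Implicit Defensive.
Import GRing.Theory.
Local Open Scope ring_scope.

Section Valued.
Variable k : fieldType.
Variable abs : k -> R.

Definition nonarch_abs : Prop :=
  (forall x, Rle R0 (abs x)) /\
  (forall x, abs x = R0 <-> x = 0) /\
  (forall x y, abs (x * y) = Rmult (abs x) (abs y)) /\
  (forall x y, Rle (abs (x + y)) (Rmax (abs x) (abs y))).

Definition abs_complete : Prop :=
  forall u : nat -> k,
    (forall eps, Rlt R0 eps -> exists N : nat,
        forall m m', (N <= m)%N -> (N <= m')%N -> Rlt (abs (u m - u m')) eps) ->
    exists l : k, forall eps, Rlt R0 eps -> exists N : nat,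
        forall m, (N <= m)%N -> Rlt (abs (u m - l)) eps.

Definition nontrivial_value_group : Prop :=
  exists a : k, a <> 0 /\ abs a <> R1.

(** |k^x| is not discrete (1 is not an isolated point of |k^x| in R_{>0}). *)
Definition value_group_not_discrete : Prop :=
  forall eps, Rlt R0 eps ->
    exists a : k, a <> 0 /\ abs a <> R1 /\ Rlt (Rabs (Rminus (abs a) R1)) eps.

Definition cdisk (c : k) (r : R) (x : k) : Prop := Rle (abs (x - c)) r.

Definition spherically_complete : Prop :=
  forall (c : nat -> k) (r : nat -> R),
    (forall m, Rlt R0 (r m)) ->
    (forall m x, cdisk (c m.+1) (r m.+1) x -> cdisk (c m) (r m) x) ->
    exists x, forall m, cdisk (c m) (r m) x.

(** The normed k-vector space k^{1/p}, modelled through the Frobenius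
    isomorphism y = x^{1/p} <-> x : an element x of k stands for x^{1/p};
    addition is addition in k, the scalar action is lam . x = lam^p x
    (since lam x^{1/p} = (lam^p x)^{1/p}), and the norm is
    ||x^{1/p}|| = |x|^{1/p}. *)
Variable p : nat.
Definition kp_scale (lam x : k) : k := lam ^+ p * x.
Definition kp_norm (x : k) : R :=
  if x == 0 then R0 else Rpower (abs x) (Rinv (INR p)).

Definition kp_comb (e : nat -> k) (s : seq nat) (c : nat -> k) : k :=
  \sum_(i <- s) kp_scale (c i) (e i).

Definition kp_subspace (V : k -> Prop) : Prop :=
  V 0 /\ (forall x y, V x -> V y -> V (x + y)) /\
  (forall lam x, V x -> V (kp_scale lam x)).

Definition kp_dense (V : k -> Prop) : Prop :=
  forall x eps, Rlt R0 eps -> exists v, V v /\ Rlt (kp_norm (x - v)) eps.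

Definition kp_countable_basis (V : k -> Prop) : Prop :=
  exists (S : nat -> Prop) (e : nat -> k),
    (forall i, S i -> V (e i)) /\
    (forall (s : seq nat) (c : nat -> k), uniq s -> (forall i, i \in s -> S i) ->
        kp_comb e s c = 0 -> forall i, i \in s -> c i = 0) /\
    (forall x, V x -> exists (s : seq nat) (c : nat -> k),
        uniq s /\ (forall i, i \in s -> S i) /\ x = kp_comb e s c).

Definition case_ii : Prop :=
  exists V : k -> Prop, kp_subspace V /\ kp_dense V /\ kp_countable_basis V.

Definition kp_linear (f : k -> k) : Prop :=
  (forall x y, f (x + y) = f x + f y) /\
  (forall lam x, f (kp_scale lam x) = lam * f x).

Definition kp_norm_polar : Prop :=
  forall x, Rlt R1 (kp_norm x) ->
    exists f : k -> k, kp_linear f /\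
      (forall y, Rle (kp_norm y) R1 -> Rle (abs (f y)) R1) /\
      Rlt R1 (abs (f x)).

Variable n : nat.
Definition mindex := {ffun 'I_n -> nat}.
Definition series := mindex -> k.
Definition mdeg (nu : mindex) : nat := (\sum_(i < n) nu i)%N.

Definition tate (a : series) : Prop :=
  forall eps, Rlt R0 eps -> exists N : nat,
    forall nu : mindex, (N <= mdeg nu)%N -> Rlt (abs (a nu)) eps.

Definition sadd (a b : series) : series := fun nu => a nu + b nu.
Definition sone : series := fun nu => if nu == [ffun => 0%N] then 1 else 0.
(** Cauchy product: (ab)_nu = sum_{mu <= nu} a_mu b_{nu - mu}. *)
Definition smul (a b : series) : series := fun nu =>
  \sum_(mu : {ffun 'I_n -> 'I_(mdeg nu).+1} | [forall i, (mu i <= nu i)%N])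
     a [ffun i => nat_of_ord (mu i)] * b [ffun i => (nu i - mu i)%N].
Definition spow (a : series) (m : nat) : series := iter m (smul a) sone.

(** T_n(k) is Frobenius split: there is phi : T_n -> T_n, additive, with
    phi(r^p x) = r phi(x) (i.e. T_n-linear F_* T_n -> T_n) and phi(1) = 1. *)
Definition tate_frobenius_split : Prop :=
  exists phi : series -> series,
    (forall x, tate x -> tate (phi x)) /\
    (forall x y, tate x -> tate y -> phi (sadd x y) = sadd (phi x) (phi y)) /\
    (forall r x, tate r -> tate x -> phi (smul (spow r p) x) = smul r (phi x)) /\
    phi sone = sone.

End Valued.

From Pilot Require Import Defs.
From Stdlib Require Import Reals Lra Classical.
From Stdlib Require Import IndefiniteDescription ClassicalEpsilon FunctionalExtensionality.
From HB Require Import structures.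
From mathcomp Require Import all_boot all_order all_algebra.
From mathcomp Require Import mpoly ring.
From mathcomp Require Import boolp classical_sets.
Set Implicit Arguments. Unset Strict Implicit. Unset Printing Implicit Defensive.
Import GRing.Theory.

(* Given a k-linear map psi : k^{1/p} -> k with psi 1 = 1 and |psi y| <= M ||y||,
   the coefficientwise map  sum a_nu X^nu |-> sum psi (a_{p nu}) X^nu  is a
   Frobenius splitting of T_n(k): the coefficient of r^p at nu is (r_mu)^p when
   nu = p mu and 0 otherwise, which gives T_n-linearity, and the bound on psi
   preserves the Tate condition.
   Such a psi is built as in the non-Archimedean Hahn-Banach theorem, starting
   from a^p |-> a, of norm 1.  Extending a partial map of norm <= M to a new
   point x means finding a common point c of the pairwise meeting balls
   B(psi d, M ||x - d||).  In case (i) spherical completeness provides c, and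
   Zorn's lemma a total extension.  In case (ii) completeness alone provides c
   after dilating the balls by an arbitrary factor > 1, which suffices to extend
   along the countable basis keeping M <= 2; once the dense subspace is in the
   domain the radii become arbitrarily small, completeness provides c without
   loss, and Zorn finishes.  In case (iii) a polar functional f separating the
   unit ball from a point of norm > 1 is bounded, and f / f 1 works. *)

Section Frobenius.
Local Open Scope ring_scope.
Variables (k : fieldType) (p : nat) (hchar : p \in [pchar k]).

Lemma pchar_gt0 : (0 < p)%N.
Proof. exact/prime_gt0/(pcharf_prime hchar). Qed.

Lemma expr0_pchar : 0 ^+ p = 0 :> k.
Proof. by rewrite expr0n; case: p pchar_gt0. Qed.

Lemma frobD (x y : k) : (x + y) ^+ p = x ^+ p + y ^+ p.
Proof. by rewrite -!(pFrobenius_autE hchar) rmorphD. Qed.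

Lemma frobN1 : (-1) ^+ p = -1 :> k.
Proof. by rewrite -(pFrobenius_autE hchar) pFrobenius_autN pFrobenius_aut1. Qed.

Lemma frobB (x y : k) : (x - y) ^+ p = x ^+ p - y ^+ p.
Proof. by rewrite -!(pFrobenius_autE hchar) rmorphB. Qed.

Lemma frob_inj : injective (fun x : k => x ^+ p).
Proof.
move=> x y /= E; apply/eqP; rewrite -subr_eq0; apply/eqP.
have : (x - y) ^+ p = 0 by rewrite frobB E subrr.
by move/eqP; rewrite expf_eq0 => /andP[_ /eqP].
Qed.

End Frobenius.

Section TateSeries.
Local Open Scope ring_scope.
Variables (k : fieldType) (n : nat).

Definition box (d : nat) := {ffun 'I_n -> 'I_d.+1}.
Definition box_val d (mu : box d) : mindex n := [ffun i => nat_of_ord (mu i)].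
Definition to_box d (a : mindex n) : box d := [ffun i => inord (a i)].
Definition mbounded d (a : mindex n) := forall i, (a i <= d)%N.
Definition mle (a b : mindex n) : bool := [forall i, (a i <= b i)%N].
Definition msub (a b : mindex n) : mindex n := [ffun i => (a i - b i)%N].
Definition to_mnm (a : mindex n) : 'X_{1..n} := [multinom a i | i < n].

Lemma box_val_inj d : injective (@box_val d).
Proof.
move=> m1 m2 /ffunP E; apply/ffunP => i; apply/val_inj.
by move: (E i); rewrite !ffunE.
Qed.

Lemma to_mnm_inj : injective to_mnm.
Proof. by move=> a b /mnmP E; apply/ffunP => i; move: (E i); rewrite !mnmE. Qed.

Lemma box_val_bounded d (mu : box d) : mbounded d (box_val mu).
Proof. by move=> i; rewrite ffunE -ltnS. Qed.

Lemma box_valK d a : mbounded d a -> box_val (to_box d a) = a.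
Proof. by move=> h; apply/ffunP => i; rewrite !ffunE inordK // ltnS. Qed.

Lemma mdeg_bounded nu : mbounded (Defs.mdeg nu) nu.
Proof. by move=> i; rewrite /Defs.mdeg (bigD1 i) //= leq_addr. Qed.

Lemma mle_to_mnm a b : mle a b = (to_mnm a <= to_mnm b)%MM.
Proof. by apply/forallP/mnm_lepP => h i; move: (h i); rewrite ?mnmE. Qed.

Lemma to_mnm_sub a b : to_mnm (msub a b) = (to_mnm a - to_mnm b)%MM.
Proof. by apply/mnmP => i; rewrite mnmBE !mnmE ffunE. Qed.

Lemma to_mnm_eq0 nu : (to_mnm nu == 0%MM) = (nu == [ffun => 0%N]).
Proof.
apply/eqP/eqP => [E|->]; last by apply/mnmP => i; rewrite mnmE mnm0E ffunE.
by apply/ffunP => i; move: (f_equal (fun m : 'X_{1..n} => m i) E); rewrite mnmE mnm0E ffunE.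
Qed.

Lemma smulE (a b : series k n) nu :
  smul a b nu = \sum_(mu : box (Defs.mdeg nu) | mle (box_val mu) nu)
     a (box_val mu) * b (msub nu (box_val mu)).
Proof.
rewrite /smul; apply: eq_big => [mu|mu _].
  by apply: eq_forallb => i; rewrite ffunE.
by congr (_ * _); congr b; apply/ffunP => i; rewrite !ffunE.
Qed.

Lemma sum_box_resize d1 d2 nu (F : mindex n -> k) :
  mbounded d1 nu -> mbounded d2 nu ->
  \sum_(mu : box d1 | mle (box_val mu) nu) F (box_val mu) =
  \sum_(mu : box d2 | mle (box_val mu) nu) F (box_val mu).
Proof.
move=> h1 h2.
have key d (mu : box d) : mle (box_val mu) nu ->
    mbounded d1 (box_val mu) /\ mbounded d2 (box_val mu).
  by move=> /forallP le; split => i; apply: leq_trans (le i) _; [exact: h1|exact: h2].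
rewrite (reindex_onto (to_box d1 \o @box_val d2) (to_box d2 \o @box_val d1)) /=; last first.
  by move=> mu /key[b1 b2]; apply: box_val_inj; rewrite !box_valK.
apply: eq_big => [mu|mu /andP[/key[b1 b2] /eqP E]]; last first.
  by have := f_equal (@box_val d2) E; rewrite box_valK // => ->.
case: (boolP (mle (box_val mu) nu)) => [le|nle].
  have [b1 b2] := key _ _ le.
  by rewrite box_valK // le /=; apply/eqP; apply: box_val_inj; rewrite !box_valK.
apply/negbTE/negP => /andP[le' /eqP E]; have [b1 b2] := key _ _ le'.
have := f_equal (@box_val d2) E; rewrite box_valK // => E'.
by move: le'; rewrite E' (negbTE nle).
Qed.

Lemma sum_box_delta d t (P : pred (mindex n)) (G : mindex n -> k) :
  (P t -> mbounded d t) ->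
  \sum_(mu : box d | P (box_val mu)) (box_val mu == t)%:R * G (box_val mu) =
  (P t)%:R * G t.
Proof.
move=> hb; case: (boolP (P t)) => Pt.
  have bt := hb Pt.
  rewrite (bigD1 (to_box d t)) /= box_valK // ?eqxx ?Pt // mul1r big1 ?addr0 //.
  move=> mu /andP[_ ne]; case: eqP => [E|_]; last by rewrite mul0r.
  suff E2 : mu = to_box d t by rewrite E2 eqxx in ne.
  by apply: box_val_inj; rewrite -E box_valK //; exact: box_val_bounded.
rewrite mul0r big1 // => mu Pmu; case: eqP => [E|_]; last by rewrite mul0r.
by move: Pt; rewrite -E Pmu.
Qed.

(* Powers of series are computed through their polynomial truncations, on
   which the Frobenius is a ring morphism. *)
Definition trunc_mpoly d (a : series k n) : {mpoly k[n]} :=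
  \sum_(mu : box d) a (box_val mu) *: 'X_[to_mnm (box_val mu)].

Lemma mcoeffXM m (B : {mpoly k[n]}) t :
  ('X_[m] * B)@_t = if (m <= t)%MM then B@_(t - m) else 0.
Proof.
case: ifP => h; first by rewrite mulrC -{1}(submK h) addmC mcoeffMX.
rewrite {1}(mpolyE B) mulr_sumr raddf_sum /=; apply: big1 => m' _.
rewrite -scalerAr -mpolyXD mcoeffZ mcoeffX.
by case: eqP => [E|_]; [move: h; rewrite -E lem_addr | rewrite mulr0].
Qed.

Lemma mcoeff_trunc_mul d a B nu : mbounded d nu ->
  (trunc_mpoly d a * B)@_(to_mnm nu) =
  \sum_(mu : box d | mle (box_val mu) nu)
     a (box_val mu) * B@_(to_mnm (msub nu (box_val mu))).
Proof.
move=> hb; rewrite mulr_suml raddf_sum /= (big_mkcond (fun mu => mle _ _)) /=.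
apply: eq_bigr => mu _; rewrite -scalerAl mcoeffZ mcoeffXM mle_to_mnm to_mnm_sub.
by case: ifP => _; rewrite ?mulr0.
Qed.

Lemma spow_mcoeff d r q nu : mbounded d nu ->
  spow r q nu = ((trunc_mpoly d r) ^+ q)@_(to_mnm nu).
Proof.
elim: q nu => [|q IH] nu hb.
  by rewrite expr0 mcoeff1 /spow /= /sone to_mnm_eq0; case: eqP.
rewrite exprS mcoeff_trunc_mul //.
change (spow r q.+1 nu) with (smul r (spow r q) nu); rewrite smulE.
rewrite (@sum_box_resize _ d nu (fun m => r m * spow r q (msub nu m))) //;
  last exact: mdeg_bounded.
apply: eq_bigr => mu le; rewrite IH // => i; rewrite ffunE.
exact: leq_trans (leq_subr _ _) (hb i).
Qed.

Variables (p : nat) (hchar : p \in [pchar k]).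

Definition mscale (a : mindex n) : mindex n := [ffun i => (a i * p)%N].

Lemma to_mnm_scale a : to_mnm (mscale a) = (to_mnm a *+ p)%MM.
Proof. by apply/mnmP => i; rewrite mulmnE !mnmE ffunE. Qed.

Lemma mle_scale a b : mle (mscale a) (mscale b) = mle a b.
Proof. by apply: eq_forallb => i; rewrite !ffunE leq_pmul2r // (pchar_gt0 hchar). Qed.

Lemma msub_scale a b : msub (mscale a) (mscale b) = mscale (msub a b).
Proof. by apply/ffunP => i; rewrite !ffunE mulnBl. Qed.

Lemma mscale_eq0 a : (mscale a == [ffun => 0%N]) = (a == [ffun => 0%N]).
Proof.
apply/eqP/eqP => [E|->]; apply/ffunP => i; last by rewrite !ffunE.
move: (f_equal (fun f : mindex n => f i) E); rewrite !ffunE => /eqP.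
by rewrite muln_eq0 (negbTE (lt0n_neq0 (pchar_gt0 hchar))) orbF => /eqP.
Qed.

Lemma mdeg_scale a : (Defs.mdeg a <= Defs.mdeg (mscale a))%N.
Proof. by apply: leq_sum => i _; rewrite ffunE leq_pmulr // (pchar_gt0 hchar). Qed.

Lemma trunc_mpoly_frob d r : (trunc_mpoly d r) ^+ p =
  \sum_(mu : box d) r (box_val mu) ^+ p *: 'X_[(to_mnm (box_val mu) *+ p)%MM].
Proof.
have hc : p \in [pchar {mpoly k[n]}] := rmorph_pchar (@mpolyC n k) hchar.
rewrite -(pFrobenius_autE hc) /trunc_mpoly rmorph_sum; apply: eq_bigr => mu _.
by rewrite /= pFrobenius_autE exprZn mpolyXn.
Qed.

Lemma spow_pchar_coef d (r : series k n) nu : mbounded d nu ->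
  spow r p nu = \sum_(mu : box d) r (box_val mu) ^+ p * (mscale (box_val mu) == nu)%:R.
Proof.
move=> hb; rewrite (spow_mcoeff r p hb) trunc_mpoly_frob raddf_sum.
apply: eq_bigr => mu _.
by rewrite /= mcoeffZ mcoeffX -to_mnm_scale (inj_eq to_mnm_inj).
Qed.

Variable psi : k -> k.
Hypothesis psiD : forall x y, psi (x + y) = psi x + psi y.
Hypothesis psiZ : forall l x, psi (l ^+ p * x) = l * psi x.

Lemma psi0 : psi 0 = 0.
Proof. by have := psiZ 0 0; rewrite mulr0 mul0r. Qed.

Definition split_series (x : series k n) : series k n := fun mu => psi (x (mscale mu)).

Lemma split_series_frob (r x : series k n) :
  split_series (smul (spow r p) x) = smul r (split_series x).
Proof.
apply: functional_extensionality => mu; rewrite /split_series !smulE.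
set D := Defs.mdeg (mscale mu).
have bD : mbounded D (mscale mu) := mdeg_bounded _.
have bmu : mbounded D mu.
  by move=> i; apply: leq_trans (bD i); rewrite ffunE leq_pmulr // (pchar_gt0 hchar).
under eq_bigr => m _ do rewrite (spow_pchar_coef r (box_val_bounded m)) mulr_suml.
rewrite exchange_big /=.
under eq_bigr => b _.
  rewrite (eq_bigr (fun m : box D => r (box_val b) ^+ p *
      ((box_val m == mscale (box_val b))%:R * x (msub (mscale mu) (box_val m))))); last first.
    by move=> m _; rewrite eq_sym mulrA.
  rewrite -mulr_sumr (@sum_box_delta D (mscale (box_val b)) (fun m => mle m (mscale mu))
              (fun m => x (msub (mscale mu) m))); last first.
    by move=> /forallP le i; apply: leq_trans (le i) (bD i).
  rewrite mle_scale msub_scale.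
  over.
rewrite (big_morph psi psiD psi0) /=.
rewrite (@sum_box_resize (Defs.mdeg mu) D mu (fun m => r m * psi (x (mscale (msub mu m))))) //;
  last exact: mdeg_bounded.
rewrite (big_mkcond (fun m => mle (box_val m) mu)) /=.
apply: eq_bigr => b _; case: ifP => _; first by rewrite mul1r psiZ.
by rewrite mul0r mulr0 psi0.
Qed.

End TateSeries.

Section AbsoluteValue.
Local Open Scope R_scope.
Variables (k : fieldType) (abs : k -> R) (p : nat).
Hypothesis habs : nonarch_abs abs.
Hypothesis hchar : p \in [pchar k]%R.
Local Notation kn := (kp_norm abs p).

Lemma abs_ge0 x : 0 <= abs x.
Proof. by case: habs. Qed.
Lemma abs_eq0 x : abs x = 0 <-> x = 0%R.
Proof. by case: habs => _ []. Qed.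
Lemma absM x y : abs (x * y)%R = abs x * abs y.
Proof. by case: habs => _ [] _ []. Qed.
Lemma absD x y : abs (x + y)%R <= Rmax (abs x) (abs y).
Proof. by case: habs => _ [] _ []. Qed.
Lemma abs0 : abs 0%R = 0.
Proof. exact/abs_eq0. Qed.

Lemma abs_gt0 x : x <> 0%R -> 0 < abs x.
Proof.
by move=> h; case: (Rle_lt_or_eq_dec _ _ (abs_ge0 x)) => // /esym/abs_eq0.
Qed.

Lemma abs1 : abs 1%R = 1.
Proof.
have h := absM 1 1; rewrite mulr1 in h.
have h1 : abs 1%R <> 0 by move/abs_eq0; apply/eqP; exact: oner_neq0.
have : abs 1%R * (abs 1%R - 1) = 0 by rewrite Rmult_minus_distr_l Rmult_1_r -h; lra.
by case/Rmult_integral => //; lra.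
Qed.

Lemma absN x : abs (- x)%R = abs x.
Proof.
have hN1 : abs (-1)%R = 1.
  have := absM (-1) (-1); rewrite mulrNN mulr1 abs1.
  by have := abs_ge0 (-1)%R; nra.
by rewrite -mulN1r absM hN1 Rmult_1_l.
Qed.

Lemma absB_sym x y : abs (x - y)%R = abs (y - x)%R.
Proof. by rewrite -absN opprB. Qed.

Lemma absB_le_max x y z : abs (x - z)%R <= Rmax (abs (x - y)%R) (abs (y - z)%R).
Proof. by have := absD (x - y) (y - z); rewrite addrA subrK. Qed.

Lemma absX x m : abs (x ^+ m)%R = abs x ^ m.
Proof. by elim: m => [|m IH]; [rewrite expr0 abs1 | rewrite exprS absM IH]. Qed.

Lemma absV x : x <> 0%R -> abs (x^-1)%R = / abs x.
Proof.
move=> nx; have h := absM x (x^-1); rewrite mulfV ?abs1 in h; last exact/eqP.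
have := abs_gt0 nx => hp.
by apply: (Rmult_eq_reg_l (abs x)); [rewrite -h Rinv_r //; lra | lra].
Qed.

Lemma INR_pchar_gt0 : 0 < INR p.
Proof. by apply/lt_0_INR/ltP; exact: pchar_gt0 hchar. Qed.

Lemma kp_norm0 : kn 0%R = 0.
Proof. by rewrite /kp_norm eqxx. Qed.

Lemma kp_norm_gt0 x : x <> 0%R -> 0 < kn x.
Proof. by move=> /eqP nx; rewrite /kp_norm (negbTE nx); apply: exp_pos. Qed.

Lemma kp_norm_ge0 x : 0 <= kn x.
Proof.
case: (eqVneq x 0%R) => [->|/eqP nx]; first by rewrite kp_norm0; lra.
by left; apply: kp_norm_gt0.
Qed.

Lemma kp_norm_le x y : abs x <= abs y -> kn x <= kn y.
Proof.
move=> h; case: (eqVneq x 0%R) => [->|/eqP nx]; first by rewrite kp_norm0; apply: kp_norm_ge0.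
have hx := abs_gt0 nx.
have ny : y <> 0%R by move=> E; rewrite E abs0 in h; lra.
rewrite /kp_norm; move/eqP: nx => /negbTE ->; move/eqP: ny => /negbTE ->.
by apply: Rle_Rpower_l; [left; apply/Rinv_0_lt_compat/INR_pchar_gt0 | lra].
Qed.

Lemma kp_normD x y : kn (x + y)%R <= Rmax (kn x) (kn y).
Proof.
case: (Rle_dec (abs x) (abs y)) => h.
  have : abs (x + y)%R <= abs y by have := absD x y; rewrite Rmax_right.
  by move/kp_norm_le/Rle_trans; apply; apply: Rmax_r.
have : abs (x + y)%R <= abs x by have := absD x y; rewrite Rmax_left //; lra.
by move/kp_norm_le/Rle_trans; apply; apply: Rmax_l.
Qed.

Lemma kp_normB_sym x y : kn (x - y)%R = kn (y - x)%R.
Proof. by rewrite /kp_norm -[(y - x)%R]opprB oppr_eq0 absN. Qed.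

Lemma kp_normZ l x : kn (l ^+ p * x)%R = abs l * kn x.
Proof.
case: (eqVneq l 0%R) => [->|/eqP nl].
  by rewrite (expr0_pchar hchar) mul0r kp_norm0 abs0 Rmult_0_l.
case: (eqVneq x 0%R) => [->|/eqP nx]; first by rewrite mulr0 kp_norm0 Rmult_0_r.
have nlx : (l ^+ p * x)%R <> 0%R.
  by apply/eqP; rewrite mulf_eq0 expf_eq0; apply/norP; split; [apply/nandP; right|]; apply/eqP.
have hl := abs_gt0 nl; have hx := abs_gt0 nx.
rewrite /kp_norm; move/eqP: nlx => /negbTE ->; move/eqP: (nx) => /negbTE ->.
rewrite absM absX -Rpower_mult_distr //; last exact: pow_lt.
rewrite -Rpower_pow // Rpower_mult Rinv_r ?Rpower_1 //.
by have := INR_pchar_gt0; lra.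
Qed.

Lemma kp_norm_pchar l : kn (l ^+ p)%R = abs l.
Proof.
have := kp_normZ l 1; rewrite mulr1 /kp_norm oner_eq0 abs1.
by rewrite /Rpower ln_1 Rmult_0_r exp_0 Rmult_1_r.
Qed.

Lemma kp_norm_small (C eps : R) : 0 < eps ->
  exists delta, 0 < delta /\ forall y, abs y < delta -> C * kn y < eps.
Proof.
move=> he; set C1 := Rabs C + 1.
have hC1 : 0 < C1 by rewrite /C1; have := Rabs_pos C; lra.
have hp := INR_pchar_gt0.
exists (Rpower (eps / C1) (INR p)); split; first exact: exp_pos.
move=> y hy; case: (eqVneq y 0%R) => [->|/eqP ny]; first by rewrite kp_norm0 Rmult_0_r.
rewrite /kp_norm; move/eqP: (ny) => /negbTE ->.
have hlt : Rpower (abs y) (/ INR p) < eps / C1.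
  have -> : eps / C1 = Rpower (Rpower (eps / C1) (INR p)) (/ INR p).
    rewrite Rpower_mult Rinv_r ?Rpower_1 //; last lra.
    by apply: Rdiv_lt_0_compat; lra.
  by apply: Rlt_Rpower_l; [apply: Rinv_0_lt_compat | split => //; apply: abs_gt0].
have hpos : 0 <= Rpower (abs y) (/ INR p) by left; apply: exp_pos.
have : Rabs C * Rpower (abs y) (/ INR p) <= Rabs C * (eps / C1).
  by apply: Rmult_le_compat_l; [apply: Rabs_pos | lra].
have : C * Rpower (abs y) (/ INR p) <= Rabs C * Rpower (abs y) (/ INR p).
  by apply: Rmult_le_compat_r => //; apply: Rle_abs.
have : Rabs C * (eps / C1) < eps.
  rewrite /Rdiv -Rmult_assoc; apply: (Rmult_lt_reg_r C1) => //.
  by rewrite Rmult_assoc Rinv_l; [rewrite /C1; have := Rabs_pos C; nra | lra].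
lra.
Qed.

(* A retraction of the inclusion k -> k^{1/p}, a |-> a^p, of norm at most M. *)
Definition bounded_retraction (M : R) (psi : k -> k) : Prop :=
  (forall x y, psi (x + y)%R = (psi x + psi y)%R) /\
  (forall l x, psi (l ^+ p * x)%R = (l * psi x)%R) /\ psi 1%R = 1%R /\
  (forall x, abs (psi x) <= M * kn x).

Lemma tate_split_of_retraction n M psi : bounded_retraction M psi ->
  tate_frobenius_split abs p n.
Proof.
move=> [psiD [psiZ [psi1 psiM]]].
exists (split_series p psi); split; [|split; [|split]].
- move=> x tx eps he.
  have [delta [hd hy]] := kp_norm_small M he.
  have [N hN] := tx delta hd.
  exists N => mu hmu; apply: Rle_lt_trans (psiM _) _; apply/hy/hN.
  exact: leq_trans hmu (mdeg_scale hchar mu).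
- by move=> x y _ _; apply: functional_extensionality => mu; rewrite /split_series /sadd psiD.
- by move=> r x _ _; apply: split_series_frob.
- apply: functional_extensionality => mu.
  by rewrite /split_series /sone (mscale_eq0 hchar); case: ifP => // _; apply: psi0.
Qed.

End AbsoluteValue.

Section RealFacts.
Local Open Scope R_scope.

Lemma inv_succ_small e : 0 < e -> exists N : nat, forall m : nat, (N <= m)%N -> / INR m.+1 < e.
Proof.
move=> he; have [N hN] := INR_archimed e 1 he.
exists N => m hm.
have hNm : INR N <= INR m by apply/le_INR/leP.
rewrite S_INR; apply: (Rmult_lt_reg_l (INR m + 1)); first by have := pos_INR m; lra.
by rewrite Rinv_r; [nra | have := pos_INR m; lra].
Qed.

Lemma inv_succ_pos m : 0 < / INR m.+1.
Proof. exact/Rinv_0_lt_compat/lt_0_INR/Nat.lt_0_succ. Qed.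

Lemma inf_pos_family (I : Type) (r : I -> R) (i0 : I) : (forall i, 0 < r i) ->
  exists s, 0 <= s /\ (forall i, s <= r i) /\ (forall e, 0 < e -> exists i, r i < s + e).
Proof.
move=> hpos; pose E y := exists i, y = - r i.
have bE : bound E by exists 0 => y [i ->]; have := hpos i; lra.
have [m [ub lub]] := completeness E bE (ex_intro _ (- r i0) (ex_intro _ i0 erefl)).
exists (- m); split; [|split].
- have : m <= 0 by apply: lub => y [i ->]; have := hpos i; lra.
  lra.
- by move=> i; have := ub (- r i) (ex_intro _ i erefl); lra.
- move=> e he; apply: NNPP => hn.
  have : m <= m - e.
    apply: lub => y [i ->].
    have : ~ r i < - m + e by move=> h; apply: hn; exists i.
    lra.
  lra.
Qed.

End RealFacts.

Section Balls.
Local Open Scope R_scope.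
Variables (k : fieldType) (abs : k -> R).
Hypothesis habs : nonarch_abs abs.
Variables (I : Type) (a : I -> k) (r : I -> R).

(* In an ultrametric space this says that the closed balls B(a i, r i) meet
   pairwise. *)
Definition pairwise_meet : Prop :=
  forall i j, abs (a i - a j)%R <= Rmax (r i) (r j).

Hypothesis hmeet : pairwise_meet.

Lemma pairwise_meet_ge0 i : 0 <= r i.
Proof. by have := hmeet i i; rewrite subrr (abs0 habs) Rmax_left; lra. Qed.

Lemma pairwise_meet_ball_sub i j x : r j <= r i ->
  abs (x - a j)%R <= r j -> abs (x - a i)%R <= r i.
Proof.
move=> hji hx; apply: Rle_trans (absB_le_max habs x (a j) (a i)) _.
apply: Rmax_lub; first lra.
by apply: Rle_trans (hmeet j i) _; apply: Rmax_lub; lra.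
Qed.

Lemma complete_common_point : abs_complete abs ->
  (forall e, 0 < e -> exists i, r i < e) ->
  exists c, forall i, abs (c - a i)%R <= r i.
Proof.
move=> hcompl hsmall.
have [f hf] : exists f : nat -> I, forall m, r (f m) < / INR m.+1.
  by apply: (functional_choice (fun m i => r i < / INR m.+1)) => m; apply/hsmall/inv_succ_pos.
have [c hc] : exists c, forall eps, 0 < eps -> exists N : nat,
    forall m, (N <= m)%N -> abs (a (f m) - c)%R < eps.
  apply: hcompl => eps he; have [N hN] := inv_succ_small he; exists N => m m' hm hm'.
  by apply: Rle_lt_trans (hmeet _ _) _; apply: Rmax_lub_lt;
    [apply: Rlt_trans (hf m) (hN m hm) | apply: Rlt_trans (hf m') (hN m' hm')].
exists c => i; apply: Rnot_lt_le => hlt.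
set E := abs (c - a i)%R in hlt.
have hE : 0 < E by have := pairwise_meet_ge0 i; lra.
have [N1 hN1] := hc E hE; have [N2 hN2] := inv_succ_small hE.
set m := maxn N1 N2.
have h1 := hN1 m (leq_maxl _ _); rewrite (absB_sym habs) in h1.
have h2 := hN2 m (leq_maxr _ _).
have h3 : abs (a (f m) - a i)%R < E.
  by apply: Rle_lt_trans (hmeet _ _) _; apply: Rmax_lub_lt => //; have := hf m; lra.
have : E <= Rmax (abs (c - a (f m))%R) (abs (a (f m) - a i)%R).
  exact: absB_le_max.
by have := Rmax_lub_lt _ _ _ h1 h3; lra.
Qed.

(* Dilating all radii by t > 1: either the infimum of the radii is positive
   and some ball has radius below t times it, or it is 0 and completeness
   applies. *)
Lemma complete_common_point_dilate (i0 : I) (t : R) : abs_complete abs -> 1 < t ->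
  (forall i, 0 < r i) -> exists c, forall i, abs (c - a i)%R <= t * r i.
Proof.
move=> hcompl ht hpos.
have [s [s0 [sle sinf]]] := inf_pos_family i0 hpos.
case: (Rle_lt_or_eq_dec _ _ s0) => hs.
  have [i1 hi1] : exists i1, r i1 < s + (t - 1) * s by apply: sinf; nra.
  exists (a i1) => i; apply: Rle_trans (hmeet i1 i) _.
  by apply: Rmax_lub; have := sle i; have := hpos i; nra.
have [c hc] : exists c, forall i, abs (c - a i)%R <= r i.
  by apply: complete_common_point => // e /sinf[i hi]; exists i; lra.
by exists c => i; apply: Rle_trans (hc i) _; have := hpos i; nra.
Qed.

Lemma sph_complete_common_point (i0 : I) : spherically_complete abs ->
  (forall i, 0 < r i) -> exists c, forall i, abs (c - a i)%R <= r i.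
Proof.
move=> hsc hpos.
have [s [s0 [sle sinf]]] := inf_pos_family i0 hpos.
case: (Classical_Prop.classic (exists i1, r i1 <= s)) => [[i1 hi1]|hn].
  exists (a i1) => i; apply: Rle_trans (hmeet i1 i) _.
  by apply: Rmax_lub; [have := sle i|]; lra.
have hgt i : s < r i by apply: Rnot_le_lt => h; apply: hn; exists i.
have [f hf] : exists f : nat -> I, forall m, r (f m) < s + / INR m.+1.
  by apply: (functional_choice (fun m i => r i < s + / INR m.+1)) => m; apply/sinf/inv_succ_pos.
(* the running minimum of the radii along f gives a nested sequence of balls *)
pose g := fix g m := match m with
  | O => f O
  | S m' => if Rle_dec (r (f m'.+1)) (r (g m')) then f m'.+1 else g m' end.
have gdec m : r (g m.+1) <= r (g m).
  by rewrite /=; case: Rle_dec => h; [exact: h | exact: Rle_refl].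
have gf m : r (g m) <= r (f m).
  case: m => [|m] /=; first exact: Rle_refl.
  by case: Rle_dec => h; [exact: Rle_refl | left; exact: Rnot_le_lt h].
have [c hc] := hsc (fun m => a (g m)) (fun m => r (g m)) (fun m => hpos (g m))
  (fun m x => pairwise_meet_ball_sub (gdec m)).
exists c => i.
have [N hN] : exists N : nat, forall m, (N <= m)%N -> / INR m.+1 < r i - s.
  by apply: inv_succ_small; have := hgt i; lra.
apply: (pairwise_meet_ball_sub (j := g N)) (hc N).
by have := hN N (leqnn N); have := gf N; have := hf N; lra.
Qed.

End Balls.

Lemma bigcup_chain2 (T : Type) (F : set (set T)) x y : total_on F subset ->
  bigcup F id x -> bigcup F id y -> exists2 X, F X & X x /\ X y.
Proof.
move=> Ftot [X FX Xx] [Y FY Yy].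
by case: (Ftot X Y FX FY) => sub; [exists Y => //; split => //; exact: sub
                                  | exists X => //; split => //; exact: sub].
Qed.

(* Partial maps k^{1/p} -> k are handled through their graphs, so that
   extensions and unions of chains need no dependent types. *)
Section Graphs.
Local Open Scope R_scope.
Variables (k : fieldType) (abs : k -> R) (p : nat).
Hypothesis habs : nonarch_abs abs.
Hypothesis hchar : p \in [pchar k]%R.
Local Notation kn := (kp_norm abs p).

Definition functional_graph (G : k -> k -> Prop) := forall x a b, G x a -> G x b -> a = b.

Definition bounded_graph (M : R) (G : k -> k -> Prop) : Prop :=
  functional_graph G /\ (forall x a y b, G x a -> G y b -> G (x + y)%R (a + b)%R) /\
  (forall l x a, G x a -> G (l ^+ p * x)%R (l * a)%R) /\
  (forall x a, G x a -> abs a <= M * kn x).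

Definition frob_graph (x a : k) : Prop := x = (a ^+ p)%R.
Definition graph_le (G H : k -> k -> Prop) := forall x a, G x a -> H x a.
Definition graph_dom (G : k -> k -> Prop) x := exists a, G x a.
Definition graph_point (G : k -> k -> Prop) := {z : k * k | G z.1 z.2}.

Lemma bounded_graph_frob : bounded_graph 1 frob_graph.
Proof.
split; [|split; [|split]].
- by move=> x a b -> /(frob_inj hchar).
- by move=> x a y b -> ->; rewrite /frob_graph (frobD hchar).
- by move=> l x a ->; rewrite /frob_graph exprMn.
- by move=> x a ->; rewrite (kp_norm_pchar habs hchar); lra.
Qed.

Lemma frob_graph00 : frob_graph 0%R 0%R.
Proof. by rewrite /frob_graph (expr0_pchar hchar). Qed.

Lemma bounded_graph_mono M M' G : M <= M' -> bounded_graph M G -> bounded_graph M' G.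
Proof.
move=> hM [hf [ha [hs hb]]]; split; [|split; [|split]] => // x a /hb h.
by apply: Rle_trans h _; apply: Rmult_le_compat_r => //; exact: kp_norm_ge0.
Qed.

Lemma bounded_graphB M G x a y b : bounded_graph M G -> G x a -> G y b ->
  G (x - y)%R (a - b)%R.
Proof.
move=> [_ [hD [hZ _]]] hxa hyb; apply: hD => //.
by have := hZ (-1)%R _ _ hyb; rewrite (frobN1 hchar) !mulN1r.
Qed.

Lemma graph_dom_dist_gt0 G x d a : ~ graph_dom G x -> G d a -> 0 < kn (x - d)%R.
Proof.
move=> nd h; apply: kp_norm_gt0.
by move/eqP; rewrite subr_eq0 => /eqP E; apply: nd; exists a; rewrite E.
Qed.

(* The balls in which a value at x must lie to keep the bound M. *)
Lemma bounded_graph_meet M G x : 0 <= M -> bounded_graph M G ->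
  pairwise_meet abs (fun i : graph_point G => (sval i).2)
                    (fun i => M * kn (x - (sval i).1)%R).
Proof.
move=> hM hG [[d a] h1] [[d' a'] h2] /=.
have [_ [_ [_ hb]]] := hG.
apply: Rle_trans (hb _ _ (bounded_graphB hG h1 h2)) _.
rewrite RmaxRmult //; apply: Rmult_le_compat_l => //.
have -> : (d - d')%R = ((d - x) + (x - d'))%R by rewrite addrA subrK.
by rewrite (kp_normB_sym p habs x d); apply: kp_normD.
Qed.

Definition adjoin_graph (G : k -> k -> Prop) (x c : k) (z w : k) : Prop :=
  exists l d a, G d a /\ z = (l ^+ p * x + d)%R /\ w = (l * c + a)%R.

Lemma adjoin_graph_functional M G x c : bounded_graph M G -> ~ graph_dom G x ->
  functional_graph (adjoin_graph G x c).
Proof.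
move=> hG ndom z w1 w2 [l [d [a [hda [-> ->]]]]] [l' [d' [a' [hda' [E ->]]]]].
have [hf [_ [hZ _]]] := hG.
case: (eqVneq l l') => [el|nl].
  subst l'; have ed : d = d' := addrI _ E.
  by rewrite -ed in hda'; rewrite (hf _ _ _ hda hda').
exfalso; apply: ndom; exists ((l - l')^-1 * (a' - a))%R.
have -> : x = (((l - l')^-1) ^+ p * (d' - d))%R.
  have <- : ((l - l') ^+ p * x)%R = (d' - d)%R.
    apply/eqP; rewrite -subr_eq0; apply/eqP.
    transitivity ((l ^+ p * x + d) - (l' ^+ p * x + d'))%R.
      by rewrite (frobB hchar); ring.
    by rewrite E subrr.
  by rewrite mulrA -exprMn mulVf ?subr_eq0 // expr1n mul1r.
exact/hZ/(bounded_graphB hG).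
Qed.

Lemma bounded_graph_adjoin M M' G x c : 0 <= M -> M <= M' -> bounded_graph M G ->
  ~ graph_dom G x -> (forall d a, G d a -> abs (c - a)%R <= M' * kn (x - d)%R) ->
  bounded_graph M' (adjoin_graph G x c).
Proof.
move=> hM0 hMM' hG ndom hc.
have [_ [hD [hZ hb]]] := hG.
split; [exact: adjoin_graph_functional hG ndom|split; [|split]].
- move=> z1 w1 z2 w2 [l [d [a [hda [-> ->]]]]] [l' [d' [a' [hda' [-> ->]]]]].
  exists (l + l')%R, (d + d')%R, (a + a')%R; split; first exact: hD.
  by rewrite (frobD hchar); split; ring.
- move=> m z w [l [d [a [hda [-> ->]]]]].
  exists (m * l)%R, (m ^+ p * d)%R, (m * a)%R; split; first exact: hZ.
  by rewrite exprMn; split; ring.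
- move=> z w [l [d [a [hda [-> ->]]]]].
  case: (eqVneq l 0%R) => [->|nl].
    rewrite (expr0_pchar hchar) !mul0r !add0r; apply: Rle_trans (hb _ _ hda) _.
    by apply: Rmult_le_compat_r => //; exact: kp_norm_ge0.
  (* factor out l and apply the bound at the point (- l^-1)^p d of G *)
  set u := (l^-1)%R.
  have := hc _ _ (hZ (- u)%R _ _ hda).
  have -> : (c - - u * a)%R = (c + u * a)%R by ring.
  have -> : (x - (- u) ^+ p * d)%R = (x + u ^+ p * d)%R.
    by rewrite exprNn (frobN1 hchar); ring.
  have -> : (l * c + a)%R = (l * (c + u * a))%R by rewrite mulrDr mulrA mulfV ?mul1r.
  have -> : (l ^+ p * x + d)%R = (l ^+ p * (x + u ^+ p * d))%R.
    by rewrite mulrDr mulrA -exprMn mulfV ?expr1n ?mul1r.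
  rewrite (absM habs) (kp_normZ habs hchar).
  by have := abs_ge0 habs l; nra.
Qed.

Lemma bounded_graph_extend M M' G x c : 0 <= M -> M <= M' -> bounded_graph M G ->
  G 0%R 0%R -> ~ graph_dom G x ->
  (forall i : graph_point G, abs (c - (sval i).2)%R <= M' * kn (x - (sval i).1)%R) ->
  exists G', bounded_graph M' G' /\ graph_le G G' /\ graph_dom G' x.
Proof.
move=> hM0 hMM' hG G00 ndom hc.
exists (adjoin_graph G x c); split.
  by apply: bounded_graph_adjoin hM0 hMM' hG ndom _ => d a h; exact: (hc (exist _ (d, a) h)).
split; first by move=> d a hda; exists 0%R, d, a; rewrite (expr0_pchar hchar) !mul0r !add0r.
by exists c, 1%R, 0%R, 0%R; split => //; rewrite expr1n !mul1r !addr0.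
Qed.

Lemma bounded_graph_dom_comb M G (e : nat -> k) s c : bounded_graph M G ->
  G 0%R 0%R -> (forall i, i \in s -> graph_dom G (e i)) ->
  graph_dom G (kp_comb p e s c).
Proof.
move=> [_ [hD [hZ _]]] G00; rewrite /kp_comb.
elim: s => [|i s IH] he; first by rewrite big_nil; exists 0%R.
have [b hb] := he i (mem_head i s).
have [a ha] : graph_dom G (\sum_(j <- s) kp_scale p (c j) (e j)).
  by apply: IH => j hj; apply: he; rewrite in_cons hj orbT.
by rewrite big_cons; exists (c i * b + a)%R; apply: hD => //; apply: hZ.
Qed.

Definition graph_of (S : set (k * k)) (x a : k) : Prop := S (x, a).

Lemma bounded_graph_bigcup M (F : set (set (k * k))) : total_on F subset ->
  (forall S, F S -> bounded_graph M (graph_of S)) ->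
  bounded_graph M (graph_of (bigcup F id)).
Proof.
move=> Ftot FP; split; [|split; [|split]].
- move=> x a b h1 h2; have [X FX [hX1 hX2]] := bigcup_chain2 Ftot h1 h2.
  by have [hf _] := FP X FX; apply: (hf x).
- move=> x a y b h1 h2; have [X FX [hX1 hX2]] := bigcup_chain2 Ftot h1 h2.
  by have [_ [hD _]] := FP X FX; exists X => //; exact: hD hX1 hX2.
- move=> l x a [X FX hX].
  by have [_ [_ [hZ _]]] := FP X FX; exists X => //; exact: hZ hX.
- by move=> x a [X FX hX]; have [_ [_ [_ hb]]] := FP X FX; exact: hb hX.
Qed.

Lemma bounded_graph_total M (B : k -> k -> Prop) :
  bounded_graph M B -> B 0%R 0%R ->
  (forall G, bounded_graph M G -> graph_le B G -> forall x, ~ graph_dom G x ->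
     exists G', bounded_graph M G' /\ graph_le G G' /\ graph_dom G' x) ->
  exists A, bounded_graph M A /\ graph_le B A /\ forall x, graph_dom A x.
Proof.
move=> hB hB0 hext.
(* the condition on nonempty S only makes the empty chain admissible *)
pose P (S : set (k * k)) :=
  bounded_graph M (graph_of S) /\ ((S !=set0)%classic -> graph_le B (graph_of S)).
have hchain F : (F `<=` P)%classic -> total_on F subset -> P (bigcup F id).
  move=> FP Ftot; split; first by apply: bounded_graph_bigcup => // S /FP[].
  move=> [z [X FX Xz]] x a hxa; exists X => //.
  by apply: (FP X FX).2 => //; exists z.
have [A [[PA AB] Amax]] := Zorn_bigcup hchain.
have hBA : graph_le B (graph_of A).
  apply: AB; apply: NNPP => nA; apply: (Amax (fun z => B z.1 z.2)).
    split; first by move=> z Az; case: nA; exists z.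
    by move=> hsub; apply: nA; exists (0%R, 0%R); exact: (hsub (0%R, 0%R) hB0).
  by split => // _ x a.
exists (graph_of A); split=> //; split => // x.
apply: NNPP => nd.
have [G' [PG' [sub' [a' ha']]]] := hext _ PA hBA x nd.
apply: (Amax (fun z => G' z.1 z.2)).
  split; first by move=> [y b] h; exact: sub' _ _ h.
  by move=> h; apply: nd; exists a'; exact: (h (x, a') ha').
by split => // _ y b hyb; apply/sub'/hBA.
Qed.

Lemma retraction_of_total_graph M A : bounded_graph M A -> A 1%R 1%R ->
  (forall x, graph_dom A x) -> exists psi, bounded_retraction abs p M psi.
Proof.
move=> [hf [hD [hZ hb]]] A11 htot.
have [psi hpsi] := functional_choice A htot.
exists psi; split; [|split; [|split]].
- by move=> x y; apply: (hf (x + y)%R); [apply: hpsi | apply: hD; apply: hpsi].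
- by move=> l x; apply: (hf (l ^+ p * x)%R); [apply: hpsi | apply: hZ; apply: hpsi].
- exact: hf (hpsi 1%R) A11.
- by move=> x; apply: hb; apply: hpsi.
Qed.

(* Completeness gives a common point of the balls only after dilating them,
   so each one-point extension costs an increase of the bound. *)
Lemma bounded_graph_extend_dilate M M' G x : abs_complete abs -> 0 < M -> M < M' ->
  bounded_graph M G -> G 0%R 0%R ->
  exists G', bounded_graph M' G' /\ graph_le G G' /\ graph_dom G' x.
Proof.
move=> hcompl hM hMM' hG G00.
case: (Classical_Prop.classic (graph_dom G x)) => [hd|nd].
  by exists G; split; [apply: bounded_graph_mono hG; lra | split].
have hpos (i : graph_point G) : 0 < M * kn (x - (sval i).1)%R.
  exact/Rmult_lt_0_compat/(graph_dom_dist_gt0 nd (svalP i)).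
have ht : 1 < M' / M by apply: (Rmult_lt_reg_r M) => //; rewrite /Rdiv Rmult_assoc Rinv_l; lra.
have [c hc] := complete_common_point_dilate habs (bounded_graph_meet x (Rlt_le _ _ hM) hG)
  (exist _ (0%R, 0%R) G00) hcompl ht hpos.
apply: (bounded_graph_extend (c := c) (Rlt_le _ _ hM) (Rlt_le _ _ hMM') hG G00 nd).
move=> i; apply: Rle_trans (hc i) _; apply: Req_le.
by rewrite /Rdiv Rmult_assoc -(Rmult_assoc (/ M)) Rinv_l ?Rmult_1_l //; lra.
Qed.

End Graphs.

Section SphericallyComplete.
Local Open Scope R_scope.
Variables (k : fieldType) (abs : k -> R) (p : nat).
Hypothesis habs : nonarch_abs abs.
Hypothesis hchar : p \in [pchar k]%R.

Lemma retraction_sph_complete : spherically_complete abs ->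
  exists psi, bounded_retraction abs p 1 psi.
Proof.
move=> hsc.
have [A [hA [hBA htot]]] : exists A, bounded_graph abs p 1 A /\
    graph_le (frob_graph p) A /\ forall x, graph_dom A x.
  apply: (bounded_graph_total (bounded_graph_frob habs hchar) (frob_graph00 hchar)).
  move=> G hG hBG x nd; have G00 := hBG _ _ (frob_graph00 hchar).
  have hmeet := bounded_graph_meet habs hchar x Rle_0_1 hG.
  have [i|c hc] := sph_complete_common_point habs hmeet (exist _ (0%R, 0%R) G00) hsc.
    exact: Rmult_lt_0_compat Rlt_0_1 (graph_dom_dist_gt0 abs p nd (svalP i)).
  exact: (bounded_graph_extend habs hchar Rle_0_1 (Rle_refl 1) hG G00 nd hc).
by apply: retraction_of_total_graph hA _ htot; apply: hBA; rewrite /frob_graph expr1n.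
Qed.

End SphericallyComplete.

Section CountableBasis.
Local Open Scope R_scope.
Variables (k : fieldType) (abs : k -> R) (p : nat).
Hypothesis habs : nonarch_abs abs.
Hypothesis hchar : p \in [pchar k]%R.
Hypothesis hcompl : abs_complete abs.
Variable e : nat -> k.

Definition basis_bound (m : nat) : R := 2 - / 2 ^ m.

Lemma basis_bound_ge1 m : 1 <= basis_bound m.
Proof.
have h : 1 <= 2 ^ m by apply: pow_R1_Rle; lra.
have : / 2 ^ m <= 1 by rewrite -Rinv_1; apply: Rinv_le_contravar; lra.
by rewrite /basis_bound; lra.
Qed.

Lemma basis_bound_le2 m : basis_bound m <= 2.
Proof.
by rewrite /basis_bound; have := Rinv_0_lt_compat _ (pow_lt 2 m ltac:(lra)); lra.
Qed.

Lemma basis_bound_lt m : basis_bound m < basis_bound m.+1.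
Proof.
rewrite /basis_bound /= Rinv_mult.
by have := Rinv_0_lt_compat _ (pow_lt 2 m ltac:(lra)); lra.
Qed.

Definition extend_to (x : k) (M : R) (G : k -> k -> Prop) : k -> k -> Prop :=
  epsilon (inhabits G)
    (fun G' => bounded_graph abs p M G' /\ graph_le G G' /\ graph_dom G' x).

Lemma extend_to_spec x M M' G : 0 < M -> M < M' -> bounded_graph abs p M G -> G 0%R 0%R ->
  let G' := extend_to x M' G in
  bounded_graph abs p M' G' /\ graph_le G G' /\ graph_dom G' x.
Proof.
move=> hM hMM' hG G00.
exact: (epsilon_spec (inhabits G)
  (fun G' => bounded_graph abs p M' G' /\ graph_le G G' /\ graph_dom G' x)
  (bounded_graph_extend_dilate habs hchar x hcompl hM hMM' hG G00)).
Qed.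

Fixpoint basis_graph (m : nat) : k -> k -> Prop :=
  if m is m'.+1 then extend_to (e m') (basis_bound m) (basis_graph m')
  else frob_graph p.

Lemma basis_graph_succ m :
  bounded_graph abs p (basis_bound m) (basis_graph m) -> basis_graph m 0%R 0%R ->
  bounded_graph abs p (basis_bound m.+1) (basis_graph m.+1) /\
  graph_le (basis_graph m) (basis_graph m.+1) /\ graph_dom (basis_graph m.+1) (e m).
Proof.
move=> hG G00; apply: extend_to_spec hG G00; last exact: basis_bound_lt.
by have := basis_bound_ge1 m; lra.
Qed.

Lemma basis_graph_bounded m :
  bounded_graph abs p (basis_bound m) (basis_graph m) /\ basis_graph m 0%R 0%R.
Proof.
elim: m => [|m [hG G00]].
  split; last exact: frob_graph00.
  exact: bounded_graph_mono (basis_bound_ge1 0) (bounded_graph_frob habs hchar).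
by have [h1 [h2 _]] := basis_graph_succ hG G00; split; last exact: h2.
Qed.

Lemma basis_graph_step m :
  graph_le (basis_graph m) (basis_graph m.+1) /\ graph_dom (basis_graph m.+1) (e m).
Proof. by have [hG G00] := basis_graph_bounded m; have [_] := basis_graph_succ hG G00. Qed.

Lemma basis_graph_mono m m' : (m <= m')%N -> graph_le (basis_graph m) (basis_graph m').
Proof.
elim: m' => [|m' IH]; first by rewrite leqn0 => /eqP ->.
rewrite leq_eqVlt => /orP[/eqP -> //|]; rewrite ltnS => hmm' x a h.
exact/(proj1 (basis_graph_step m'))/IH.
Qed.

Definition basis_union (x a : k) : Prop := exists m, basis_graph m x a.

Lemma basis_union2 x a y b : basis_union x a -> basis_union y b ->
  exists m, basis_graph m x a /\ basis_graph m y b.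
Proof.
move=> [m1 h1] [m2 h2]; exists (maxn m1 m2).
by split; [apply: basis_graph_mono (leq_maxl m1 m2) _ _ h1
          | apply: basis_graph_mono (leq_maxr m1 m2) _ _ h2].
Qed.

Lemma bounded_graph_basis_union : bounded_graph abs p 2 basis_union.
Proof.
split; [|split; [|split]].
- move=> x a b h1 h2; have [m [g1 g2]] := basis_union2 h1 h2.
  by have [[hf _] _] := basis_graph_bounded m; exact: hf g1 g2.
- move=> x a y b h1 h2; have [m [g1 g2]] := basis_union2 h1 h2.
  by have [[_ [hD _]] _] := basis_graph_bounded m; exists m; exact: hD.
- move=> l x a [m h].
  by have [[_ [_ [hZ _]]] _] := basis_graph_bounded m; exists m; exact: hZ.
- move=> x a [m h]; have [[_ [_ [_ hb]]] _] := basis_graph_bounded m.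
  apply: Rle_trans (hb _ _ h) _; apply: Rmult_le_compat_r; first exact: kp_norm_ge0.
  exact: basis_bound_le2.
Qed.

Lemma basis_union_dom i : graph_dom basis_union (e i).
Proof. by have [_ [a ha]] := basis_graph_step i; exists a, i.+1. Qed.

End CountableBasis.

Section CountableBasisRetraction.
Local Open Scope R_scope.
Variables (k : fieldType) (abs : k -> R) (p : nat).
Hypothesis habs : nonarch_abs abs.
Hypothesis hchar : p \in [pchar k]%R.
Local Notation kn := (kp_norm abs p).

(* Once the dense subspace lies in the domain, the balls to be met have
   arbitrarily small radii and completeness suffices, with no loss. *)
Lemma retraction_countable_basis : abs_complete abs -> case_ii abs p ->
  exists psi, bounded_retraction abs p 2 psi.
Proof.
move=> hcompl [V [_ [hdense [S [e [_ [_ hspan]]]]]]].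
have hB := bounded_graph_basis_union habs hchar hcompl e.
have B00 : basis_union abs p e 0%R 0%R by exists 0%N; exact: frob_graph00.
have domV x : V x -> graph_dom (basis_union abs p e) x.
  move=> /hspan [s [c [_ [_ ->]]]].
  by apply: (bounded_graph_dom_comb c hB B00) => i _; apply: basis_union_dom.
have [A [hA [hBA htot]]] : exists A, bounded_graph abs p 2 A /\
    graph_le (basis_union abs p e) A /\ forall x, graph_dom A x.
  apply: (bounded_graph_total hB B00) => G hG hBG x nd.
  have h20 : 0 <= 2 := Rlt_le _ _ Rlt_0_2.
  have hmeet := bounded_graph_meet habs hchar x h20 hG.
  have [|c hc] := complete_common_point habs hmeet hcompl.
    move=> eps he; have [v [Vv hv]] := hdense x (eps / 2) ltac:(lra).
    have [a ha] := domV v Vv.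
    by exists (exist _ (v, a) (hBG _ _ ha)) => /=; lra.
  exact: (bounded_graph_extend habs hchar h20 (Rle_refl 2) hG (hBG _ _ B00) nd hc).
apply: retraction_of_total_graph hA _ htot.
by apply: hBA; exists 0%N; rewrite /= /frob_graph expr1n.
Qed.

End CountableBasisRetraction.

Lemma ex_least_nat (P : nat -> Prop) N : P N ->
  exists j, P j /\ forall i, (i < j)%N -> ~ P i.
Proof.
move=> PN; have hex : exists j, `[< P j >] by exists N; apply/asboolP.
case: (ex_minnP hex) => j /asboolP Pj jmin; exists j; split => // i ij /asboolP /jmin.
by rewrite leqNgt ij.
Qed.

Section Polar.
Local Open Scope R_scope.
Variables (k : fieldType) (abs : k -> R) (p : nat).
Hypothesis habs : nonarch_abs abs.
Hypothesis hchar : p \in [pchar k]%R.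
Local Notation kn := (kp_norm abs p).

Lemma exists_abs_lt1 : nontrivial_value_group abs -> exists pi : k, pi <> 0%R /\ abs pi < 1.
Proof.
move=> [a [na ha1]]; case: (Rlt_dec (abs a) 1) => h; first by exists a.
have h2 : 1 < abs a by have := abs_ge0 habs a; lra.
exists (a^-1)%R; split; first by apply/eqP; rewrite invr_eq0; apply/eqP.
by rewrite (absV habs na) -Rinv_1; apply: Rinv_lt_contravar; lra.
Qed.

(* Multiplying by a power of pi brings any positive s into (|pi|, 1]: first
   make s/|pi|^N > 1, then take the least power of |pi| bringing it below 1. *)
Lemma exists_scale_into_annulus (pi : k) s : pi <> 0%R -> abs pi < 1 -> 0 < s ->
  exists l : k, l <> 0%R /\ abs pi < abs l * s /\ abs l * s <= 1.
Proof.
move=> npi hq hs; set q := abs pi in hq *.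
have q0 : 0 < q by apply: abs_gt0.
have hRq : Rabs q < 1 by rewrite Rabs_pos_eq; lra.
have qpos i : 0 < q ^ i by apply: pow_lt.
have [N hN] : exists N, q ^ N < s.
  have [N hN] := pow_lt_1_zero q hRq s hs; exists N.
  by have := hN N (le_n N); rewrite Rabs_pos_eq //; left.
set t := s / q ^ N.
have hst : s = t * q ^ N.
  by rewrite /t /Rdiv Rmult_assoc Rinv_l ?Rmult_1_r //; apply: Rgt_not_eq; apply: qpos.
clearbody t.
have ht : 1 < t.
  apply: (Rmult_lt_reg_r (q ^ N)) => //; rewrite Rmult_1_l -hst; exact: hN.
have [J hJ] : exists J, t * q ^ J <= 1.
  have [J hJ] := pow_lt_1_zero q hRq (/ t) (Rinv_0_lt_compat t ltac:(lra)); exists J.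
  have := hJ J (le_n J); rewrite Rabs_pos_eq; last by left.
  move=> h; apply: (Rmult_le_reg_l (/ t)); first by apply: Rinv_0_lt_compat; lra.
  rewrite -Rmult_assoc Rinv_l ?Rmult_1_l ?Rmult_1_r; [left; exact: h | lra].
have [[|i] [hj hmin]] := ex_least_nat (P := fun j => t * q ^ j <= 1) hJ.
  by move: hj; rewrite /= Rmult_1_r; lra.
have hi : 1 < t * q ^ i by apply: Rnot_le_lt; apply: hmin; exact: ltnSn.
have pN : (pi ^+ N)%R <> 0%R by apply/eqP; rewrite expf_eq0 negb_and; apply/orP; right; apply/eqP.
exists (pi ^+ i.+1 / pi ^+ N)%R; split.
  apply/eqP; rewrite mulf_eq0 invr_eq0 !expf_eq0 !negb_or !negb_and.
  by apply/andP; split; apply/orP; right; apply/eqP.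
have -> : abs (pi ^+ i.+1 / pi ^+ N)%R * s = q * (t * q ^ i).
  rewrite (absM habs) (absV habs pN) !(absX habs) -/q hst /= (Rmult_comm t).
  rewrite -Rmult_assoc (Rmult_assoc _ (/ q ^ N)) Rinv_l ?Rmult_1_r; last first.
    by apply: Rgt_not_eq; apply: qpos.
  by rewrite !Rmult_assoc (Rmult_comm (q ^ i)).
have -> : q * (t * q ^ i) = t * q ^ i.+1 by rewrite /= -!Rmult_assoc (Rmult_comm q).
split => //; rewrite /= -Rmult_assoc (Rmult_comm t) Rmult_assoc -{1}(Rmult_1_r q).
exact: Rmult_lt_compat_l.
Qed.

(* Rescaling y into the annulus |pi| < ||l y|| <= 1 shows that a functional
   bounded by 1 on the unit ball has norm at most 1 / |pi|. *)
Lemma polar_functional_bound (f : k -> k) (pi : k) : kp_linear p f ->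
  pi <> 0%R -> abs pi < 1 -> (forall y, kn y <= 1 -> abs (f y) <= 1) ->
  forall y, abs (f y) <= / abs pi * kn y.
Proof.
move=> [fD fZ] npi hpi fball y.
have hpi0 := abs_gt0 habs npi.
case: (eqVneq y 0%R) => [->|/eqP ny].
  have f0 : f 0%R = 0%R by have := fZ 0%R 0%R; rewrite /kp_scale mulr0 mul0r.
  by rewrite f0 (abs0 habs) kp_norm0 Rmult_0_r; lra.
have [l [nl [hl1 hl2]]] := exists_scale_into_annulus npi hpi (kp_norm_gt0 abs p ny).
have : abs (f (kp_scale p l y)) <= 1 by apply: fball; rewrite (kp_normZ habs hchar).
rewrite fZ (absM habs) => hfl.
have hfy := abs_ge0 habs (f y).
have : abs pi * abs (f y) <= kn y.
  have : abs pi * abs (f y) <= abs l * kn y * abs (f y) by nra.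
  have := Rmult_le_compat_l _ _ _ (kp_norm_ge0 abs p y) hfl.
  lra.
move=> h; apply: (Rmult_le_reg_l (abs pi)) => //.
by rewrite -Rmult_assoc Rinv_r ?Rmult_1_l //; lra.
Qed.

Lemma retraction_polar : nontrivial_value_group abs -> kp_norm_polar abs p ->
  exists M psi, bounded_retraction abs p M psi.
Proof.
move=> /exists_abs_lt1 [pi [npi hpi]] hpolar.
have hpi0 := abs_gt0 habs npi.
have hx0 : 1 < kn ((pi^-1) ^+ p)%R.
  by rewrite (kp_norm_pchar habs hchar) (absV habs npi) -Rinv_1; apply: Rinv_lt_contravar; lra.
have [f [hf [fball fx0]]] := hpolar _ hx0.
have [fD fZ] := hf.
have f1 : f 1%R <> 0%R.
  move=> h0; move: fx0.
  have -> : f ((pi^-1) ^+ p)%R = (pi^-1 * f 1%R)%R by rewrite -fZ /kp_scale mulr1.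
  by rewrite h0 mulr0 (abs0 habs); lra.
have hf1 := abs_gt0 habs f1.
exists (/ abs (f 1%R) * / abs pi), (fun y => (f 1%R)^-1 * f y)%R.
split; [|split; [|split]].
- by move=> x y; rewrite fD mulrDr.
- by move=> l x; rewrite (fZ l x) mulrCA.
- by rewrite mulVf //; apply/eqP.
- move=> x; rewrite (absM habs) (absV habs f1) Rmult_assoc.
  apply: Rmult_le_compat_l; first by left; apply: Rinv_0_lt_compat.
  exact: polar_functional_bound hf npi hpi fball x.
Qed.

End Polar.

Theorem corollaryD (k : fieldType) (p : nat) (abs : k -> R)
  (hchar : p \in [pchar k]%R)
  (habs : nonarch_abs abs) (hcompl : abs_complete abs)
  (hnontriv : nontrivial_value_group abs)
  (n : nat) (hn : (0 < n)%N)
  (hcases : spherically_complete abs \/ case_ii abs p \/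
            (value_group_not_discrete abs /\ kp_norm_polar abs p)) :
  tate_frobenius_split abs p n.
Proof.
have [M [psi hpsi]] : exists M psi, bounded_retraction abs p M psi.
  case: hcases => [hsc|[hii|[_ hpolar]]].
  - by eexists; exact: retraction_sph_complete habs hchar hsc.
  - by eexists; exact: retraction_countable_basis habs hchar hcompl hii.
  - exact: retraction_polar habs hchar hnontriv hpolar.
exact: (tate_split_of_retraction habs hchar n hpsi).
Qed.
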